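(* Let $X$ be a real Banach space and $f:X\to\mathbb{R}\cup\{+\infty\}$ proper, convex and lsc. Let $x\in\mathrm{int}(\mathrm{dom}\, f)$, let $v^*\in X^*$ be a point at which $f^*$ is Fréchet differentiable, and set $\widehat{a}=Df^*(v^* )$. Assume $F_{\partial f}(x,v^* )=f(x)+f^*(v^* )$. Then (i) $\mathcal{M}_{\partial f}(x,v^* )\neq\varnothing$; (ii) for every $(a,a^* )\in\mathcal{M}_{\partial f}(x,v^* )$ one has $a=\widehat{a}$ and $a^*\in\partial f(x)\cap\partial f(\widehat{a})$.
   Context: $f^*$ is the Fenchel conjugate; at a Fréchet differentiability point $v^*$ of $f^*$ the derivative $Df^*(v^* )$ belongs to $X$. $F_{\partial f}(x,x^* )=\sup_{(y,y^* )\in\mathrm{Gr}(\partial f)}\{\langle y,x^*\rangle+\langle x,y^*\rangle-\langle y,y^*\rangle\}$ and $\mathcal{M}_{\partial f}(x,x^* )=\{(a,a^* )\in\mathrm{Gr}(\partial f): F_{\partial f}(x,x^* )=\langle x,a^*\rangle+\langle a,x^*\rangle-\langle a,a^*\rangle\}$. *)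

From HB Require Import structures.
From mathcomp Require Import all_boot all_order all_algebra.
From mathcomp Require Import all_classical all_reals.
From mathcomp Require Import ereal topology normedtype.
Set Implicit Arguments. Unset Strict Implicit. Unset Printing Implicit Defensive.
Import Order.TTheory GRing.Theory Num.Theory.
Import numFieldNormedType.Exports.
Local Open Scope classical_set_scope.
Local Open Scope ring_scope.

Section Defs.
Context {R : realType} {X : normedModType R}.

Definition is_dual (phi : X -> R) : Prop :=
  (forall (a : R) (x y : X), phi (a *: x + y) = a * phi x + phi y)
  /\ continuous phi.

Definition dnorm (phi : X -> R) : R :=
  sup [set `|phi x| | x in [set x : X | `|x| <= 1]].

Definition proper_fun (f : X -> \bar R) : Prop :=
  (forall x, f x != -oo%E) /\ (exists x, f x \is a fin_num).

Definition convex_fun (f : X -> \bar R) : Prop :=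
  forall (x y : X) (t : R), 0 < t < 1 ->
    (f (t *: x + (1 - t) *: y)%R <= t%:E * f x + (1 - t)%:E * f y)%E.

Definition lsc_fun (f : X -> \bar R) : Prop :=
  forall c : R, closed [set x | (f x <= c%:E)%E].

Definition dom (f : X -> \bar R) : set X := [set x | (f x < +oo)%E].

Definition fconj (f : X -> \bar R) (phi : X -> R) : \bar R :=
  ereal_sup [set ((phi y)%:E - f y)%E | y in [set: X]].

Definition subdiff (f : X -> \bar R) (x : X) : set (X -> R) :=
  [set phi | is_dual phi /\ f x \is a fin_num /\
     forall y, (f x + (phi (y - x)%R)%:E <= f y)%E].

Definition graph_subdiff (f : X -> \bar R) : set (X * (X -> R)) :=
  [set p | subdiff f p.1 p.2].

Definition fitzpatrick (f : X -> \bar R) (x : X) (xs : X -> R) : \bar R :=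
  ereal_sup [set (xs p.1 + p.2 x - p.2 p.1)%:E | p in graph_subdiff f].

Definition Mset (f : X -> \bar R) (x : X) (xs : X -> R) : set (X * (X -> R)) :=
  [set p | graph_subdiff f p /\
     fitzpatrick f x xs = (p.2 x + xs p.1 - p.2 p.1)%:E].

Definition frechet_diff_at (g : (X -> R) -> \bar R) (v : X -> R) (a : X) : Prop :=
  g v \is a fin_num /\
  forall eps : R, 0 < eps -> exists2 delta : R, 0 < delta &
    forall h : X -> R, is_dual h -> dnorm h < delta ->
      (`| g (v \+ h)%R - g v - (h a)%:E | <= (eps * dnorm h)%:E)%E.

End Defs.

(* Let fsv = f^*(vs). Take (y, ys) in the graph of the subdifferential whose
   Fitzpatrick value is eps-close to f(x) + fsv. That gap is the sum of the
   Fenchel-Young gap of vs at y and of the subgradient gap of ys between y and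
   x, so y is an eps-maximizer of vs - f and ys is an eps-subgradient at x.
   Frechet differentiability of f^* at vs forces eps-maximizers to converge
   to ahat (Smulian), lower semicontinuity then gives f(ahat) = vs(ahat) - fsv,
   and the upper bound of f near the interior point x bounds all such ys
   uniformly. Instead of extracting a weak-star cluster point of the ys,
   Hahn-Banach yields a continuous linear L below the sublinear envelope
   w |-> inf_eps sup { ys w | (y, ys) eps-optimal }; L is a subgradient at x
   and at ahat, so (ahat, L) lies in M. Conversely an element of M is
   eps-optimal for every eps, which forces a = ahat and a^* in the
   subdifferential at x. *)

From HB Require Import structures.
From mathcomp Require Import all_boot all_order all_algebra.
From mathcomp Require Import all_classical all_reals.
From mathcomp Require Import ereal topology normedtype sequences.
From mathcomp Require Import ring lra.
Import Order.TTheory GRing.Theory Num.Theory.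
Import numFieldNormedType.Exports.
Local Open Scope classical_set_scope.
Local Open Scope ring_scope.

Set Implicit Arguments. Unset Strict Implicit. Unset Printing Implicit Defensive.

Section LinearForm.
Context {R : pzRingType} {X : lmodType R}.

Definition linear_form (L : X -> R) := forall a x y, L (a *: x + y) = a * L x + L y.

Variables (L : X -> R) (linL : linear_form L).

Lemma linear_form0 : L 0 = 0.
Proof.
have := linL 1 0 0; rewrite scale1r addr0 mul1r => L00.
by apply: (addrI (L 0)); rewrite addr0 -L00.
Qed.

Lemma linear_formD x y : L (x + y) = L x + L y.
Proof. by rewrite -[x in LHS]scale1r linL mul1r. Qed.

Lemma linear_formZ a x : L (a *: x) = a * L x.
Proof. by rewrite -[_ *: _]addr0 linL linear_form0 addr0. Qed.

Lemma linear_formN x : L (- x) = - L x.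
Proof. by rewrite -scaleN1r linear_formZ mulN1r. Qed.

Lemma linear_formB x y : L (x - y) = L x - L y.
Proof. by rewrite linear_formD linear_formN. Qed.

End LinearForm.

Section HahnBanach.
Context {R : realType} {X : lmodType R}.
Variable p : X -> R.
Hypotheses (p_subadd : forall x y, p (x + y) <= p x + p y)
  (p_homog : forall t x, 0 <= t -> p (t *: x) = t * p x).

Let p0 : p 0 = 0.
Proof. by rewrite -(scale0r (0 : X)) p_homog // mul0r. Qed.

(* Partial linear forms are represented by their graphs, so that a chain of
   extensions is merged by a plain union. *)
Definition dominated_graph (A : set (X * R)) :=
  [/\ forall x r s, A (x, r) -> A (x, s) -> r = s,
      forall a x r y s, A (x, r) -> A (y, s) -> A (a *: x + y, a * r + s) &
      forall x r, A (x, r) -> r <= p x].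

Lemma dominated_graph_bigcup (F : set (set (X * R))) :
  F `<=` dominated_graph -> total_on F subset ->
  dominated_graph (\bigcup_(A in F) A).
Proof.
move=> Fdom Ftot; split.
- move=> x r s [A FA Ar] [B FB Bs].
  have [AB|BA] := Ftot _ _ FA FB.
  + by have [funB _ _] := Fdom _ FB; exact: funB (AB _ Ar) Bs.
  + by have [funA _ _] := Fdom _ FA; exact: funA Ar (BA _ Bs).
- move=> a x r y s [A FA Ar] [B FB Bs].
  have [AB|BA] := Ftot _ _ FA FB.
  + by have [_ linB _] := Fdom _ FB; exists B => //; exact: linB (AB _ Ar) Bs.
  + by have [_ linA _] := Fdom _ FA; exists A => //; exact: linA Ar (BA _ Bs).
- by move=> x r [A FA Ar]; have [_ _ domA] := Fdom _ FA; exact: domA Ar.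
Qed.

Lemma dominated_graph_line z : dominated_graph [set (t *: z, t * p z) | t in [set: R]].
Proof.
split.
- move=> x r s [t _ [<- <-]] [u _ [tzuz <-]].
  have /eqP : (t - u) *: z = 0 by rewrite scalerBl tzuz subrr.
  rewrite scaler_eq0 => /orP[|/eqP z0]; first by rewrite subr_eq0 => /eqP ->.
  by move: tzuz; rewrite z0 p0 !mulr0.
- move=> a x r y s [t _ [<- <-]] [u _ [<- <-]].
  by exists (a * t + u) => //; rewrite scalerDl scalerA mulrDl mulrA.
- move=> x r [t _ [<- <-]].
  have [t0|t0] := leP 0 t; first by rewrite p_homog.
  have pNz : 0 <= p z + p (- z) by rewrite -p0 -[X in p X](subrr z) p_subadd.
  have -> : t *: z = (- t) *: (- z) by rewrite scaleNr scalerN opprK.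
  rewrite p_homog; last by rewrite oppr_ge0 ltW.
  nra.
Qed.

Section OneStepExtension.
Variables (A : set (X * R)) (x1 : X).
Hypotheses (domA : dominated_graph A) (A00 : A (0, 0))
  (x1_out : ~ exists r, A (x1, r)).

Let graphZ t x r : A (x, r) -> A (t *: x, t * r).
Proof.
by case: domA => _ linA _ Axr; have := linA t _ _ _ _ Axr A00; rewrite !addr0.
Qed.

Lemma extension_value : exists c,
  (forall x r, A (x, r) -> r - p (x - x1) <= c) /\
  (forall y s, A (y, s) -> c <= p (y + x1) - s).
Proof.
case: domA => _ linA pA.
have gap x r y s : A (x, r) -> A (y, s) -> r - p (x - x1) <= p (y + x1) - s.
  move=> Axr Ays; have := pA _ _ (linA 1 _ _ _ _ Axr Ays).
  rewrite scale1r mul1r => rs_le.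
  have := p_subadd (x - x1) (y + x1); rewrite addrCA subrK addrC; lra.
pose lower := [set e | exists x r, A (x, r) /\ e = r - p (x - x1)].
have lower_ub : ubound lower (p (0 + x1) - 0).
  by move=> _ [x [r [Axr ->]]]; exact: gap.
have lower_n0 : lower !=set0 by exists (0 - p (0 - x1)), 0, 0.
exists (sup lower); split.
- move=> x r Axr; apply: ub_le_sup; first by exists (p (0 + x1) - 0).
  by exists x, r.
- by move=> y s Ays; apply: ge_sup => // _ [x [r [Axr ->]]]; exact: gap.
Qed.

Definition graph_extension (c : R) : set (X * R) :=
  [set u | exists x r t, A (x, r) /\ u = (x + t *: x1, r + t * c)].

Variable c : R.
Hypotheses (c_ge : forall x r, A (x, r) -> r - p (x - x1) <= c)
  (c_le : forall y s, A (y, s) -> c <= p (y + x1) - s).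

Lemma graph_extension_sub : A `<=` graph_extension c.
Proof. by move=> [x r] Axr; exists x, r, 0; rewrite scale0r addr0 mul0r addr0. Qed.

Lemma graph_extension_x1 : graph_extension c (x1, c).
Proof. by exists 0, 0, 1; rewrite scale1r add0r mul1r add0r. Qed.

Let extension_bound t y s : A (y, s) -> s + t * c <= p (y + t *: x1).
Proof.
case: domA => _ _ pA Ays.
have [t0|t0|->] := ltgtP t 0; last by rewrite scale0r mul0r !addr0; exact: pA.
- set u := - t; have u0 : 0 < u by rewrite oppr_gt0.
  have := c_ge (graphZ u^-1 Ays).
  have -> : u^-1 *: y - x1 = u^-1 *: (y + t *: x1).
    by rewrite scalerDr scalerA /u invrN mulNr mulVf ?lt_eqF // scaleN1r.
  rewrite p_homog; last by rewrite invr_ge0 ltW.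
  move=> /(ler_wpM2l (ltW u0)).
  rewrite mulrBr !mulrA mulfV ?gt_eqF // !mul1r /u; lra.
- have := c_le (graphZ t^-1 Ays).
  have -> : t^-1 *: y + x1 = t^-1 *: (y + t *: x1).
    by rewrite scalerDr scalerA mulVf ?gt_eqF // scale1r.
  rewrite p_homog; last by rewrite invr_ge0 ltW.
  move=> /(ler_wpM2l (ltW t0)).
  rewrite mulrBr !mulrA mulfV ?gt_eqF // !mul1r; lra.
Qed.

Lemma dominated_graph_extension : dominated_graph (graph_extension c).
Proof.
case: domA => funA linA _; split.
- move=> x r s [y [r' [t [Ay [-> ->]]]]] [y' [s' [t' [Ay' [e ->]]]]].
  have [tt'|tt'] := eqVneq t t'.
    by move: e; rewrite tt' => /addIr ey; rewrite ey in Ay; rewrite (funA _ _ _ Ay Ay').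
  (* two distinct values of [t] would put [x1] in the domain of [A] *)
  have ex1 : (t' - t)^-1 *: ((-1) *: y' + y) + 0 = x1.
    have -> : (-1) *: y' + y = (t' - t) *: x1.
      by apply: (addIr (t *: x1)); rewrite -scalerDl subrK scaleN1r -addrA e addKr.
    by rewrite addr0 scalerA mulVf ?scale1r // subr_eq0 eq_sym.
  case: x1_out; rewrite -ex1.
  by eexists; exact: linA (linA _ _ _ _ _ Ay' Ay) A00.
- move=> a x r y s [x' [r' [t [Ax' [-> ->]]]]] [y' [s' [t' [Ay' [-> ->]]]]].
  exists (a *: x' + y'), (a * r' + s'), (a * t + t'); split; first exact: linA.
  congr pair; last by ring.
  by rewrite scalerDr scalerA addrACA scalerDl.
- by move=> x r [y [s [t [Ays [-> ->]]]]]; exact: extension_bound.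
Qed.

End OneStepExtension.

Lemma hahn_banach z : exists L : X -> R,
  [/\ linear_form L, forall x, L x <= p x & L z = p z].
Proof.
(* [Zorn_bigcup] also takes the union of the empty chain, hence the
   conditional membership of [(z, p z)]. *)
pose admissible A := dominated_graph A /\ (A !=set0 -> A (z, p z)).
have admissible_chain F : F `<=` admissible -> total_on F subset ->
    admissible (\bigcup_(A in F) A).
  move=> Fadm Ftot; split.
    by apply: dominated_graph_bigcup => // A /Fadm[].
  by move=> [u [A FA Au]]; exists A => //; apply: (Fadm _ FA).2; exists u.
have [A [[domA Az] Amax]] := Zorn_bigcup admissible_chain.
have {}Az : A (z, p z).
  apply: Az; apply: contrapT => /set0P/negP/negPn/eqP A0.
  have line_z : [set (t *: z, t * p z) | t in [set: R]] (z, p z).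
    by exists 1 => //; rewrite scale1r mul1r.
  apply: (Amax _ _ (conj (dominated_graph_line z) (fun _ => line_z))).
  by rewrite A0; split; [exact: sub0set | move=> /(_ _ line_z)].
have A00 : A (0, 0).
  case: domA => _ linA _; have := linA (-1) _ _ _ _ Az Az.
  by rewrite scaleN1r addNr mulN1r addNr.
have Atot x : exists r, A (x, r).
  apply: contrapT => x_out.
  have [c [c_ge c_le]] := extension_value x domA A00.
  apply: (Amax (graph_extension A x c)).
    split; first exact: graph_extension_sub.
    by move=> sub; apply: x_out; exists c; exact/sub/graph_extension_x1.
  split; first exact: dominated_graph_extension c_ge c_le.
  by move=> _; exact: graph_extension_sub.
pose L x := projT1 (cid (Atot x)).
have AL x : A (x, L x) by rewrite /L; case: cid.
case: domA => funA linA pA.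
exists L; split.
- by move=> a x y; exact: funA (AL _) (linA _ _ _ _ _ (AL x) (AL y)).
- by move=> x; exact: pA (AL x).
- exact: funA (AL _) Az.
Qed.
End HahnBanach.

Section NormedSpace.
Context {R : realType} {X : normedModType R}.

Lemma bounded_linear_form_is_dual (L : X -> R) (C : R) :
  linear_form L -> (forall y, `|L y| <= C * `|y|) -> is_dual L.
Proof.
move=> linL LC; split => // x; apply/cvgrPdist_lt => e e0.
have C1 : 0 < `|C| + 1 by rewrite ltr_pwDr // normr_ge0.
near=> t.
rewrite -(linear_formB linL); apply: le_lt_trans (LC _) _.
apply: le_lt_trans (ler_wpM2r (normr_ge0 _) (ler_norm C)) _.
have : `|x - t| < e / (`|C| + 1).
  near: t; apply/nbhs_ballP; exists (e / (`|C| + 1)); first by rewrite /= divr_gt0.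
  by move=> t; rewrite -ball_normE.
rewrite ltr_pdivlMr // => xt_lt.
apply: le_lt_trans xt_lt; rewrite mulrC ler_wpM2l ?normr_ge0 //; lra.
Unshelve. all: by end_near.
Qed.

Lemma is_dual_bounded (L : X -> R) :
  is_dual L -> exists2 C : R, 0 < C & forall y, `|L y| <= C * `|y|.
Proof.
move=> [linL /(_ 0)/cvgrPdist_lt/(_ 1 ltr01)].
rewrite (linear_form0 linL) => /nbhs_ballP[d /= d0 L_ball].
exists (2 / d) => [|y]; first by rewrite divr_gt0.
have [->|y0] := eqVneq y 0; first by rewrite (linear_form0 linL) !normr0 mulr0.
have ny0 : 0 < `|y| by rewrite normr_gt0.
have k0 : 0 <= d / (2 * `|y|) by rewrite divr_ge0 ?ltW // mulr_gt0.
have : `|L (d / (2 * `|y|) *: y)| < 1.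
  have := L_ball (d / (2 * `|y|) *: y).
  rewrite -ball_normE /ball_ /= !sub0r !normrN; apply.
  rewrite normrZ ger0_norm //.
  have -> : d / (2 * `|y|) * `|y| = d / 2 by field; rewrite gt_eqF.
  lra.
rewrite (linear_formZ linL) normrM ger0_norm //.
rewrite mulrAC ltr_pdivrMr ?mulr_gt0 // mul1r => Ly_lt.
rewrite mulrAC ler_pdivlMr // mulrC; lra.
Qed.

Lemma dnorm_le (h : X -> R) (c : R) :
  0 <= c -> (forall y, `|h y| <= c * `|y|) -> dnorm h <= c.
Proof.
move=> c0 hc; apply: ge_sup; first by exists `|h 0|, 0 => //=; rewrite normr0.
move=> _ [y /= y1 <-]; apply: le_trans (hc y) _.
by rewrite -[leRHS]mulr1 ler_wpM2l.
Qed.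

Lemma norming_functional (z : X) :
  exists g : X -> R, [/\ is_dual g, forall y, `|g y| <= `|y| & g z = `|z|].
Proof.
have normZ t (y : X) : 0 <= t -> `|t *: y| = t * `|y|.
  by move=> t0; rewrite normrZ ger0_norm.
have [g [linL g_le gz]] := hahn_banach (@ler_normD _ _) normZ z.
have g_norm y : `|g y| <= `|y|.
  rewrite ler_norml g_le andbT.
  by have := g_le (- y); rewrite (linear_formN linL) normrN; lra.
exists g; split => //.
by apply: (bounded_linear_form_is_dual (C := 1)) => // y; rewrite mul1r.
Qed.

Lemma linear_form_bounded_on_ball (L : X -> R) (rho c : R) :
  linear_form L -> 0 < rho -> (forall u, `|u| < rho -> L u <= c) ->
  forall w, `|L w| <= (2 * c / rho) * `|w|.
Proof.
move=> linL rho0 Lc.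
have c0 : 0 <= c by have := Lc 0; rewrite normr0 (linear_form0 linL); exact.
have L_le w : L w <= (2 * c / rho) * `|w|.
  have [->|w0] := eqVneq w 0; first by rewrite (linear_form0 linL) normr0 mulr0.
  have nw : 0 < `|w| by rewrite normr_gt0.
  have k0 : 0 < rho / (2 * `|w|) by rewrite divr_gt0 // mulr_gt0.
  have := Lc ((rho / (2 * `|w|)) *: w).
  rewrite (linear_formZ linL) normrZ (ger0_norm (ltW k0)).
  have -> : rho / (2 * `|w|) * `|w| = rho / 2 by field; rewrite gt_eqF.
  have rho2 : rho / 2 < rho by lra.
  move=> /(_ rho2) Lw.
  have -> : 2 * c / rho * `|w| = (rho / (2 * `|w|))^-1 * c.
    by field; rewrite !gt_eqF.
  by rewrite ler_pdivlMl.
move=> w; rewrite ler_norml L_le andbT.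
by have := L_le (- w); rewrite (linear_formN linL) normrN; lra.
Qed.

Lemma continuous_affine (y : X) (k : R) : continuous (fun z : X => y + k *: z).
Proof.
move=> z; apply/cvgrPdist_lt => e e0.
have k1 : 0 < `|k| + 1 by rewrite ltr_pwDr // normr_ge0.
near=> t.
rewrite opprD addrACA subrr add0r -scalerBr normrZ.
have : `|z - t| < e / (`|k| + 1).
  near: t; apply/nbhs_ballP; exists (e / (`|k| + 1)); first by rewrite /= divr_gt0.
  by move=> t; rewrite -ball_normE.
rewrite ltr_pdivlMr // => zt_lt.
apply: le_lt_trans zt_lt; rewrite mulrC ler_wpM2l ?normr_ge0 //; lra.
Unshelve. all: by end_near.
Qed.

End NormedSpace.

Section ExtendedRealFunctions.
Context {R : realType} {X : normedModType R}.

Lemma proper_fun_dom (f : X -> \bar R) z :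
  proper_fun f -> dom f z -> exists b : R, f z = b%:E.
Proof. by case=> fn _; rewrite /dom /=; move: (fn z); case: (f z) => // b; exists b. Qed.

Lemma subdiff_of_le (f : X -> \bar R) (L : X -> R) (y : X) (fy : R) :
  proper_fun f -> is_dual L -> f y = fy%:E ->
  (forall z fz, f z = fz%:E -> L (z - y) <= fz - fy) -> subdiff f y L.
Proof.
move=> [fn _] dual_L fyE L_le; split => //; split => [|z]; first by rewrite fyE.
case fzE: (f z) (fn z) => [fz| |] // _; last by rewrite leey.
by rewrite fyE -EFinD lee_fin; have := L_le _ _ fzE; lra.
Qed.

End ExtendedRealFunctions.

Section LocalUpperBound.
Context {R : realType} {X : completeNormedModType R}.

Lemma Baire_closed_cover (B : nat -> set X) :
  (forall n, closed (B n)) -> (forall y, exists n, B n y) ->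
  exists n y0 (rho : R), 0 < rho /\ ball y0 rho `<=` B n.
Proof.
move=> Bcl Bcover; apply: contrapT => no_ball.
have Bc_dense n : open (~` B n) /\ dense (~` B n).
  split; first exact: closed_openC.
  move=> O [o Oo] Oopen; apply: contrapT => OB; apply: no_ball.
  have /nbhs_ballP[rho rho0 oO] := @open_nbhs_nbhs _ o O (conj Oopen Oo).
  exists n, o, rho; split => // z oz; apply: contrapT => Bz.
  by apply: OB; exists z; split => //; exact: oO.
have [y [_ yBc]] := @Baire R X _ Bc_dense setT (ex_intro _ 0 I) openT.
by have [n Bny] := Bcover y; exact: yBc n I Bny.
Qed.

Variables (f : X -> \bar R) (x : X).
Hypotheses (fp : proper_fun f) (fc : convex_fun f) (fl : lsc_fun f)
  (xi : interior (dom f) x).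

Let sym_sublevel (m j : nat) := [set y : X |
  (f (x + m.+1%:R^-1 *: y)%R <= j%:R%:E)%E /\ (f (x - m.+1%:R^-1 *: y)%R <= j%:R%:E)%E].

Let closed_sym_sublevel m j : closed (sym_sublevel m j).
Proof.
have closed_sublevel k : closed [set y | (f (x + k *: y)%R <= j%:R%:E)%E].
  apply: (@preimage_closed _ _ (fun y => x + k *: y) [set z | (f z <= j%:R%:E)%E]).
    by move=> y _; exact: continuous_affine.
  exact: fl.
apply: closedI; first exact: closed_sublevel.
rewrite [X in closed X](_ : _ = [set y | (f (x + (- m.+1%:R^-1) *: y)%R <= j%:R%:E)%E]).
  exact: closed_sublevel.
by apply/seteqP; split => y /=; rewrite scaleNr.
Qed.

Let sym_sublevel_cover y : exists m j, sym_sublevel m j y.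
Proof.
move: xi => /nbhs_ballP[r /= r0 rdom].
have [m ym] : exists m : nat, `|y| / r < m.+1%:R.
  by exists (Num.truncn (`|y| / r)); exact: truncnS_gt.
have m0 : (0 : R) < m.+1%:R by rewrite ltr0Sn.
have ky_lt : `|m.+1%:R^-1 *: y| < r.
  rewrite normrZ ger0_norm ?invr_ge0 ?ltW // mulrC ltr_pdivrMr //.
  by rewrite ltr_pdivrMr // mulrC in ym.
have [b1 fb1] : exists b, f (x + m.+1%:R^-1 *: y) = b%:E.
  apply: (proper_fun_dom fp); apply: rdom.
  by rewrite -ball_normE /ball_ /= opprD addrA subrr add0r normrN.
have [b2 fb2] : exists b, f (x - m.+1%:R^-1 *: y) = b%:E.
  apply: (proper_fun_dom fp); apply: rdom.
  by rewrite -ball_normE /ball_ /= opprB addrC subrK.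
have bj : `|b1| + `|b2| < (Num.truncn (`|b1| + `|b2|)).+1%:R by exact: truncnS_gt.
exists m, (Num.truncn (`|b1| + `|b2|)).+1; split; rewrite ?fb1 ?fb2 lee_fin.
- by have := ler_norm b1; have := normr_ge0 b2; lra.
- by have := ler_norm b2; have := normr_ge0 b1; lra.
Qed.

(* Baire's theorem puts a ball [ball y0 rho] inside one symmetric sublevel
   set; then [x + u] is the midpoint of [x + k (y0 + w)] and [x - k (y0 - w)]
   where [k w = u]. *)
Lemma convex_lsc_bounded_above_near_interior : exists rho M : R, 0 < rho /\
  forall u, `|u| < rho -> (f (x + u)%R <= M%:E)%E.
Proof.
pose B n :=
  if @unpickle (nat * nat)%type n is Some (m, j) then sym_sublevel m j else set0.
have [n [y0 [rho [rho0]]]] : exists n y0 (rho : R), 0 < rho /\ ball y0 rho `<=` B n.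
  apply: Baire_closed_cover => [n|y].
    rewrite /B; case: unpickle => [[m j]|]; last exact: closed0.
    exact: closed_sym_sublevel.
  have [m [j mjy]] := sym_sublevel_cover y.
  by exists (pickle (m, j)); rewrite /B pickleK.
rewrite /B; case: unpickle => [[m j]|] ballB; last first.
  by have := ballB y0 (ballxx _ rho0).
have m0 : (0 : R) < m.+1%:R by rewrite ltr0Sn.
exists (rho / m.+1%:R), j%:R; split=> [|u u_lt]; first by rewrite divr_gt0.
pose k : R := m.+1%:R^-1; pose w := m.+1%:R *: u.
have kw : k *: w = u by rewrite /k /w scalerA mulVf ?gt_eqF // scale1r.
have w_lt : `|w| < rho by rewrite /w normrZ ger0_norm ?ltW // mulrC -ltr_pdivlMr.
have [f1 _] : sym_sublevel m j (y0 + w).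
  by apply: ballB; rewrite -ball_normE /ball_ /= opprD addrA subrr add0r normrN.
have [_ f2] : sym_sublevel m j (y0 - w).
  by apply: ballB; rewrite -ball_normE /ball_ /= opprB addrC subrK.
have -> : x + u = 2^-1 *: (x + k *: (y0 + w)) + (1 - 2^-1) *: (x - k *: (y0 - w)).
  have sum2 : x + k *: (y0 + w) + (x - k *: (y0 - w)) = 2 *: (x + u).
    rewrite scaler_nat scalerDr scalerBr kw opprB mulr2n.
    rewrite addrACA [RHS]addrACA; congr (_ + _).
    by rewrite [k *: y0 + u]addrC addrACA subrr addr0.
  have -> : (1 - 2^-1 : R) = 2^-1 by field.
  by rewrite -scalerDr sum2 scalerA mulVf ?pnatr_eq0 // scale1r.
have half : 0 < (2:R)^-1 < 1 by apply/andP; split; lra.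
apply: le_trans (fc _ _ half) _.
have [b1 fb1] := proper_fun_dom fp (le_lt_trans f1 (ltry _)).
have [b2 fb2] := proper_fun_dom fp (le_lt_trans f2 (ltry _)).
by move: f1 f2; rewrite fb1 fb2 !lee_fin => f1 f2; lra.
Qed.

End LocalUpperBound.

Section FrechetConjugate.
Context {R : realType} {X : normedModType R}.
Variables (f : X -> \bar R) (vs : X -> R) (ahat : X) (fsv : R).
Hypotheses (fp : proper_fun f) (fd : frechet_diff_at (fconj f) vs ahat)
  (fsvE : fconj f vs = fsv%:E).

Lemma fenchel_young y : ((vs y)%:E - f y <= fsv%:E)%E.
Proof. by rewrite -fsvE; apply: ereal_sup_ubound; exists y. Qed.

Let near_maximizer_fin y (c : R) : (c%:E <= (vs y)%:E - f y)%E -> exists fy, f y = fy%:E.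
Proof. by case: fp => fn _; move: (fn y); case: (f y) => [r| |] //= _ _; exists r. Qed.

(* Testing the derivative against [h = delta/2 g], with [g] norming
   [y - ahat], gives [(delta/2) |y - ahat| <= eps + e delta/2]. *)
Lemma near_maximizer_close (e : R) : 0 < e -> exists2 t : R, 0 < t &
  forall y (eps : R), 0 <= eps -> ((fsv - eps)%:E <= (vs y)%:E - f y)%E ->
    `|y - ahat| <= eps / t + e.
Proof.
move=> e0; case: fd => _ /(_ e e0) [delta delta0 frechet].
have t0 : 0 < delta / 2 by rewrite divr_gt0.
exists (delta / 2) => // y eps eps0 y_max.
have [fy fyE] := near_maximizer_fin y_max.
have [g [dual_g g_le gE]] := norming_functional (y - ahat).
pose h w := delta / 2 * g w.
have dual_h : is_dual h.
  apply: (bounded_linear_form_is_dual (C := delta / 2)).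
    by move=> a u v; rewrite /h (proj1 dual_g) mulrDr mulrCA.
  by move=> w; rewrite /h normrM (ger0_norm (ltW t0)) ler_wpM2l ?(ltW t0).
have dnorm_h : dnorm h <= delta / 2.
  apply: dnorm_le => [|w]; first exact: ltW.
  by rewrite /h normrM (ger0_norm (ltW t0)) ler_wpM2l ?(ltW t0).
have half_lt : delta / 2 < delta by lra.
have := frechet h dual_h (le_lt_trans dnorm_h half_lt).
have fconj_h : ((vs y + h y)%:E - f y <= fconj f (vs \+ h)%R)%E.
  by apply: ereal_sup_ubound; exists y.
rewrite fyE in fconj_h y_max; rewrite fsvE.
case: (fconj f (vs \+ h)%R) fconj_h => [G| |] //= G_ge.
rewrite lee_fin => G_le.
rewrite -EFinD lee_fin in G_ge; rewrite -EFinB lee_fin in y_max.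
have hy : h y - h ahat = delta / 2 * `|y - ahat|.
  by rewrite /h -mulrBr -(linear_formB (proj1 dual_g)) gE.
have := ler_norm (G - fsv - h ahat).
have : e * dnorm h <= e * (delta / 2) by apply: ler_wpM2l => //; exact: ltW.
move=> e_dnorm G_norm.
have : delta / 2 * `|y - ahat| <= delta / 2 * (eps / (delta / 2) + e).
  by rewrite mulrDr mulrCA mulfV ?gt_eqF // mulr1; lra.
by rewrite ler_pM2l.
Qed.

Lemma near_maximizer_exists (eps r : R) : 0 < eps -> 0 < r ->
  exists y, ((fsv - eps)%:E < (vs y)%:E - f y)%E /\ `|y - ahat| < r.
Proof.
move=> eps0 r0.
have r2 : 0 < r / 2 by lra.
have [t t0 close] := near_maximizer_close r2.
pose m := Num.min eps (t * (r / 4)).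
have m0 : 0 < m by rewrite lt_min eps0 mulr_gt0 //; lra.
have : ((fsv - m)%:E < fconj f vs)%E by rewrite fsvE lte_fin; lra.
move=> /ereal_sup_gt[_ [y _ <-] y_max]; exists y; split.
  by apply: le_lt_trans y_max; rewrite lee_fin lerB // ge_min lexx.
have := close y m (ltW m0) (ltW y_max).
have : m / t <= r / 4 by rewrite ler_pdivrMr // mulrC ge_min lexx orbT.
lra.
Qed.

Hypotheses (fl : lsc_fun f) (vs_dual : is_dual vs).

(* Near-maximizers [y] converge to [ahat] with [f y] below any [c > vs ahat - fsv],
   so lower semicontinuity puts [f ahat] below [c] too. *)
Let f_ahat_le (c : R) : vs ahat - fsv < c -> (f ahat <= c%:E)%E.
Proof.
have [C C0 vsC] := is_dual_bounded vs_dual.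
move=> c_gt; apply: (@fl c ahat) => B /nbhs_ballP[r /= r0 rB].
pose gap := c - (vs ahat - fsv).
have gap0 : 0 < gap by rewrite /gap; lra.
pose m := Num.min r (gap / (2 * C)).
have m0 : 0 < m by rewrite lt_min r0 divr_gt0 // mulr_gt0.
have gap4 : 0 < gap / 4 by lra.
have [y [y_max y_near]] := near_maximizer_exists gap4 m0.
exists y; split; last first.
  apply: rB; rewrite -ball_normE /ball_ /= distrC.
  by apply: lt_le_trans y_near _; rewrite ge_min lexx.
have [fy fyE] := near_maximizer_fin (ltW y_max).
rewrite /= fyE lee_fin; rewrite fyE -EFinB lte_fin in y_max.
have m_le : m <= gap / (2 * C) by rewrite ge_min lexx orbT.
rewrite ler_pdivlMr ?mulr_gt0 // in m_le.
have := vsC (y - ahat); rewrite (linear_formB (proj1 vs_dual)).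
have : C * `|y - ahat| <= C * m by apply: ler_wpM2l; apply: ltW.
move=> Cm vs_diff; have := ler_norm (vs y - vs ahat).
rewrite /gap in gap0 m_le y_max *; lra.
Qed.

Lemma fenchel_equality_at_gradient : f ahat = (vs ahat - fsv)%:E.
Proof.
case fa: (f ahat) => [a| |].
- congr EFin; apply/le_anti/andP; split.
    apply/ler_addgt0Pr => eps eps0.
    by have := @f_ahat_le (vs ahat - fsv + eps); rewrite fa lee_fin; apply; lra.
  by have := fenchel_young ahat; rewrite fa -EFinB lee_fin; lra.
- have : (+oo <= (vs ahat - fsv + 1)%:E)%E by rewrite -fa; apply: f_ahat_le; lra.
  by rewrite leye_eq.
- by case: fp => fn _; have := fn ahat; rewrite fa.
Qed.

End FrechetConjugate.

Section LimsupFunctional.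
Context {R : realType} {X : normedModType R}.
Variables (S : R -> set (X -> R)) (K : R).
Hypotheses (S_neq0 : forall eps, 0 < eps -> S eps !=set0)
  (S_mono : forall e1 e2, e1 <= e2 -> S e1 `<=` S e2)
  (S_linear : forall eps g, S eps g -> linear_form g)
  (S_bounded : forall eps g, eps <= 1 -> S eps g -> forall w, `|g w| <= K * `|w|).

Let s eps w := sup [set g w | g in S eps].

Let s_ub eps g w : eps <= 1 -> S eps g -> g w <= s eps w.
Proof.
move=> eps1 Sg; apply: ub_le_sup; last by exists g.
by exists (K * `|w|) => _ [h Sh <-]; apply: le_trans (ler_norm _) (S_bounded eps1 Sh w).
Qed.

Let s_le eps w c : 0 < eps -> (forall g, S eps g -> g w <= c) -> s eps w <= c.
Proof.
move=> eps0 gc; have [g Sg] := S_neq0 eps0.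
by apply: ge_sup => [|_ [h Sh <-]]; [exists (g w), g | exact: gc].
Qed.

Let s_bounded eps w : 0 < eps <= 1 -> `|s eps w| <= K * `|w|.
Proof.
move=> /andP[eps0 eps1]; rewrite ler_norml; apply/andP; split.
  have [g Sg] := S_neq0 eps0; apply: le_trans (s_ub w eps1 Sg).
  by have := S_bounded eps1 Sg w; rewrite ler_norml => /andP[].
by apply: s_le => // g Sg; apply: le_trans (ler_norm _) (S_bounded eps1 Sg w).
Qed.

(* The upper envelope of the [S eps] as [eps -> 0]: a sublinear functional
   that stands in for weak-star cluster points of the [S eps]. *)
Let q w := inf [set s eps w | eps in [set eps | 0 < eps <= 1]].

Let q_set_has_inf w : has_inf [set s eps w | eps in [set eps | 0 < eps <= 1]].
Proof.
split; first by exists (s 1 w), 1 => //=; rewrite ltr01 lexx.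
exists (- (K * `|w|)) => _ [eps eps01 <-].
by have := s_bounded w eps01; rewrite ler_norml => /andP[].
Qed.

Let q_le_s eps w : 0 < eps <= 1 -> q w <= s eps w.
Proof. by move=> eps01; apply: ge_inf; [case: (q_set_has_inf w) | exists eps]. Qed.

Let q_approx w eta : 0 < eta -> exists eps, 0 < eps <= 1 /\ s eps w < q w + eta.
Proof.
move=> eta0; have [_ [eps eps01 <-] lt] := inf_adherent eta0 (q_set_has_inf w).
by exists eps.
Qed.

Let q_subadd w1 w2 : q (w1 + w2) <= q w1 + q w2.
Proof.
apply/ler_addgt0Pr => eta eta0; have eta2 : 0 < eta / 2 by lra.
have [e1 [/andP[e10 e11] s1]] := q_approx w1 eta2.
have [e2 [/andP[e20 e21] s2]] := q_approx w2 eta2.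
pose m := Num.min e1 e2.
have m0 : 0 < m by rewrite lt_min e10 e20.
have m01 : 0 < m <= 1 by rewrite m0 ge_min e11.
apply: le_trans (q_le_s _ m01) _.
have sm_le : s m (w1 + w2) <= s e1 w1 + s e2 w2.
  apply: s_le => // g Sg; rewrite (linear_formD (S_linear Sg)).
  apply: lerD; apply: s_ub => //; apply: S_mono Sg; by rewrite ge_min lexx ?orbT.
lra.
Qed.

Let q_homle t w : 0 < t -> q (t *: w) <= t * q w.
Proof.
move=> t0; apply/ler_addgt0Pr => eta eta0.
have [eps [eps01 s_lt]] := q_approx w (divr_gt0 eta0 t0).
apply: le_trans (q_le_s _ eps01) _.
have /andP[eps0 eps1] := eps01.
have -> : t * q w + eta = t * (q w + eta / t).
  by rewrite mulrDr mulrCA mulfV ?gt_eqF ?mulr1.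
apply: s_le => // g Sg; rewrite (linear_formZ (S_linear Sg)) ler_pM2l //.
exact: ltW (le_lt_trans (s_ub w eps1 Sg) s_lt).
Qed.

Let q_homog t w : 0 <= t -> q (t *: w) = t * q w.
Proof.
rewrite le_eqVlt => /orP[/eqP <-|t0].
  rewrite scale0r mul0r; apply/le_anti/andP; split.
    have h01 : 0 < (1 : R) <= 1 by rewrite ltr01 lexx.
    apply: le_trans (q_le_s 0 h01) _.
    by have := s_bounded 0 h01; rewrite normr0 mulr0 ler_norml => /andP[].
  have two0 : (0 : R) < 2 by lra.
  by have := @q_homle 2 0 two0; rewrite scaler0; lra.
apply/le_anti/andP; split; first exact: q_homle.
have tV0 : 0 < t^-1 by rewrite invr_gt0.
have := q_homle (t *: w) tV0.
by rewrite scalerA mulVf ?gt_eqF // scale1r -ler_pdivlMl // mulrC.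
Qed.

Lemma limsup_functional : exists L, is_dual L /\
  forall w c, (forall eta, 0 < eta -> exists2 eps, 0 < eps <= 1 &
                 forall g, S eps g -> g w <= c + eta) -> L w <= c.
Proof.
have [L [linL Lq _]] := hahn_banach q_subadd q_homog 0.
have h01 : 0 < (1 : R) <= 1 by rewrite ltr01 lexx.
have L_le w : L w <= K * `|w|.
  apply: le_trans (Lq w) _; apply: le_trans (q_le_s _ h01) _.
  by have := s_bounded w h01; rewrite ler_norml => /andP[].
exists L; split.
  apply: (bounded_linear_form_is_dual (C := K)) => // w.
  rewrite ler_norml L_le andbT.
  by have := L_le (- w); rewrite (linear_formN linL) normrN; lra.
move=> w c eventually_le; apply: le_trans (Lq w) _; apply/ler_addgt0Pr => eta eta0.
have [eps /andP[eps0 eps1] gc] := eventually_le eta eta0.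
by apply: le_trans (q_le_s _ (introT andP (conj eps0 eps1))) _; exact: s_le.
Qed.

End LimsupFunctional.

Section FitzpatrickMaximizers.
Context {R : realType} {X : completeNormedModType R}.
Variables (f : X -> \bar R) (x : X) (vs : X -> R) (ahat : X) (fx fsv : R).
Hypotheses (fp : proper_fun f) (fd : frechet_diff_at (fconj f) vs ahat)
  (fsvE : fconj f vs = fsv%:E) (fxE : f x = fx%:E)
  (fitzE : fitzpatrick f x vs = (fx + fsv)%:E).

Definition fitzpatrick_maximizer (eps : R) (p : X * (X -> R)) :=
  graph_subdiff f p /\ fx + fsv - eps < vs p.1 + p.2 x - p.2 p.1.

Lemma fitzpatrick_maximizer_exists eps : 0 < eps ->
  exists p, fitzpatrick_maximizer eps p.
Proof.
move=> eps0; have : ((fx + fsv - eps)%:E < fitzpatrick f x vs)%E.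
  by rewrite fitzE lte_fin; lra.
by move=> /ereal_sup_gt[_ [p gp <-]]; rewrite lte_fin; exists p.
Qed.

Lemma fitzpatrick_maximizer_le e1 e2 p :
  e1 <= e2 -> fitzpatrick_maximizer e1 p -> fitzpatrick_maximizer e2 p.
Proof. by move=> e12 [gp p_gt]; split => //; lra. Qed.

(* The Fitzpatrick gap at [(y, ys)] is the sum of the Fenchel-Young gap of
   [vs] at [y] and of the subgradient gap of [ys] between [y] and [x]; both
   are nonnegative, so both are below [eps]. *)
Lemma fitzpatrick_maximizerP eps y ys : fitzpatrick_maximizer eps (y, ys) ->
  exists fy, [/\ f y = fy%:E, is_dual ys,
    forall z, (fy%:E + (ys (z - y))%:E <= f z)%E,
    fsv - eps < vs y - fy &
    forall z, ((fx - eps + ys (z - x))%:E <= f z)%E].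
Proof.
move=> [[dual_ys [fy_fin ys_sub]] fitz_gt].
rewrite /= in dual_ys fy_fin ys_sub fitz_gt.
have fyE : f y = (fine (f y))%:E by rewrite fineK.
have linB := linear_formB (proj1 dual_ys).
have sub_x := ys_sub x; rewrite fyE fxE -EFinD lee_fin linB in sub_x.
have fy_fy := fenchel_young fsvE y; rewrite fyE -EFinB lee_fin in fy_fy.
exists (fine (f y)); split => //; first by rewrite -fyE.
- lra.
- by move=> z; apply: le_trans (ys_sub z); rewrite fyE -EFinD lee_fin !linB; lra.
Qed.

Lemma Mset_fitzpatrick_maximizer p eps :
  Mset f x vs p -> 0 < eps -> fitzpatrick_maximizer eps p.
Proof.
by move=> [gp]; rewrite fitzE => -[p_eq] eps0; split => //; lra.
Qed.

Lemma Mset_elements a as_ : Mset f x vs (a, as_) ->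
  a = ahat /\ subdiff f x as_ /\ subdiff f ahat as_.
Proof.
move=> Ma.
have Mfm eps : 0 < eps -> fitzpatrick_maximizer eps (a, as_).
  exact: Mset_fitzpatrick_maximizer.
have [fa [faE dual_as _ _ _]] := fitzpatrick_maximizerP (Mfm 1 ltr01).
have a_max eps : 0 < eps -> ((fsv - eps)%:E <= (vs a)%:E - f a)%E.
  move=> eps0; have [fa' [fa'E _ _ a_gt _]] := fitzpatrick_maximizerP (Mfm _ eps0).
  by rewrite fa'E -EFinB lee_fin ltW.
have a_ahat : a = ahat.
  apply/eqP; rewrite -subr_eq0 -normr_le0; apply/ler_addgt0Pr => e e0.
  have [t t0 close] := near_maximizer_close fp fd fsvE e0.
  rewrite add0r; apply/ler_addgt0Pr => eta eta0.
  have eta_t0 := mulr_gt0 eta0 t0.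
  have := close a (eta * t) (ltW eta_t0) (a_max _ eta_t0).
  rewrite mulfK ?gt_eqF //; lra.
split => //; split; last by rewrite -a_ahat; exact: (proj1 Ma).
apply: subdiff_of_le dual_as fxE _ => // z fz fzE.
apply/ler_addgt0Pr => eps eps0.
have [fa' [_ _ _ _ sub_x]] := fitzpatrick_maximizerP (Mfm _ eps0).
by have := sub_x z; rewrite fzE lee_fin; lra.
Qed.

Hypotheses (fc : convex_fun f) (fl : lsc_fun f) (xi : interior (dom f) x)
  (vs_dual : is_dual vs).

(* The local upper bound of [f] near [x] bounds every eps-subgradient at [x]. *)
Lemma fitzpatrick_maximizer_bounded : exists2 K : R, 0 < K &
  forall eps y ys, eps <= 1 -> fitzpatrick_maximizer eps (y, ys) ->
    forall w, `|ys w| <= K * `|w|.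
Proof.
have [rho [M [rho0 fM]]] := convex_lsc_bounded_above_near_interior fp fc fl xi.
have fxM : fx <= M by have := fM 0; rewrite normr0 addr0 fxE lee_fin; apply.
exists (2 * (M - fx + 1) / rho) => [|eps y ys eps1 ys_max w].
  by rewrite divr_gt0 // mulr_gt0 //; lra.
have [fy [_ dual_ys _ _ sub_x]] := fitzpatrick_maximizerP ys_max.
apply: (linear_form_bounded_on_ball (proj1 dual_ys) rho0) => u u_lt.
have := le_trans (sub_x (x + u)) (fM u u_lt).
have -> : x + u - x = u by rewrite addrC addKr.
by rewrite lee_fin; lra.
Qed.

Let S eps g := exists y, fitzpatrick_maximizer eps (y, g).

Let limit_functional : exists L, is_dual L /\
  forall w c, (forall eta, 0 < eta -> exists2 eps, 0 < eps <= 1 &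
                 forall g, S eps g -> g w <= c + eta) -> L w <= c.
Proof.
have [K K0 S_bounded] := fitzpatrick_maximizer_bounded.
apply: (@limsup_functional _ _ S K).
- move=> eps eps0; have [[y g] y_max] := fitzpatrick_maximizer_exists eps0.
  by exists g, y.
- by move=> e1 e2 e12 g [y y_max]; exists y; exact: fitzpatrick_maximizer_le e12 y_max.
- by move=> eps g [y /fitzpatrick_maximizerP[fy [_ dual_g _ _ _]]]; exact: proj1 dual_g.
- by move=> eps g eps1 [y y_max]; exact: S_bounded eps1 y_max.
Qed.

Let S_subgradient_x z fz : f z = fz%:E -> forall eta, 0 < eta ->
  exists2 eps, 0 < eps <= 1 & forall g, S eps g -> g (z - x) <= fz - fx + eta.
Proof.
move=> fzE eta eta0.
exists (Num.min 1 eta); first by rewrite lt_min ltr01 eta0 ge_min lexx.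
move=> g [y /fitzpatrick_maximizerP[fy [_ _ _ _ sub_x]]].
have : Num.min 1 eta <= eta by rewrite ge_min lexx orbT.
by have := sub_x z; rewrite fzE lee_fin; lra.
Qed.

(* [g (z - ahat) = g (z - y) + g (y - ahat)]: the first term is controlled by
   the subgradient inequality at [y] and Fenchel-Young, the second by the
   uniform bound on [g] since [y] is close to [ahat]. *)
Let S_subgradient_ahat z fz : f z = fz%:E -> forall eta, 0 < eta ->
  exists2 eps, 0 < eps <= 1 &
    forall g, S eps g -> g (z - ahat) <= fz - (vs ahat - fsv) + eta.
Proof.
move=> fzE eta eta0.
have [K K0 S_bounded] := fitzpatrick_maximizer_bounded.
have [C C0 vsC] := is_dual_bounded vs_dual.
have KC0 : 0 < 2 * (K + C) by rewrite mulr_gt0 // addr_gt0.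
pose e := eta / (2 * (K + C)).
have e0 : 0 < e by rewrite divr_gt0.
have [t t0 close] := near_maximizer_close fp fd fsvE e0.
pose eps := Num.min 1 (t * e).
have eps0 : 0 < eps by rewrite lt_min ltr01 mulr_gt0.
have eps1 : eps <= 1 by rewrite ge_min lexx.
exists eps; first by rewrite eps0.
move=> g [y /[dup] g_max /fitzpatrick_maximizerP[fy [fyE dual_g sub_y y_gt _]]].
have y_near : `|y - ahat| <= 2 * e.
  have := close y eps (ltW eps0); rewrite fyE -EFinB lee_fin => /(_ (ltW y_gt)).
  have : eps / t <= e by rewrite ler_pdivrMr // mulrC ge_min lexx orbT.
  lra.
have g_yz := sub_y z; rewrite fzE -EFinD lee_fin in g_yz.
have g_y := S_bounded eps y g eps1 g_max (y - ahat).
have vs_y := vsC (y - ahat); rewrite (linear_formB (proj1 vs_dual)) in vs_y.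
have fy_le := fenchel_young fsvE y; rewrite fyE -EFinB lee_fin in fy_le.
have g_split : g (z - ahat) = g (z - y) + g (y - ahat).
  by rewrite -(linear_formD (proj1 dual_g)) addrA subrK.
have err : K * `|y - ahat| + C * `|y - ahat| <= eta.
  rewrite -mulrDl (_ : eta = (K + C) * (2 * e)); last first.
    by rewrite /e; field; rewrite gt_eqF // addr_gt0.
  by apply: ler_wpM2l => //; rewrite addr_ge0 // ltW.
move: g_y vs_y; rewrite !ler_norml => /andP[_ g_y] /andP[vs_y _].
rewrite g_split; lra.
Qed.

Lemma fitzpatrick_maximizer_limit :
  exists L, subdiff f x L /\ subdiff f ahat L.
Proof.
have [L [dual_L L_le]] := limit_functional.
have fahat := fenchel_equality_at_gradient fp fd fsvE fl vs_dual.
exists L; split.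
  apply: subdiff_of_le dual_L fxE _ => // z fz fzE.
  by apply: L_le; exact: S_subgradient_x.
apply: subdiff_of_le dual_L fahat _ => // z fz fzE.
by apply: L_le; exact: S_subgradient_ahat.
Qed.

Lemma Mset_nonempty : Mset f x vs !=set0.
Proof.
have [L [[dual_L [_ L_x]] L_ahat]] := fitzpatrick_maximizer_limit.
have fahat := fenchel_equality_at_gradient fp fd fsvE fl vs_dual.
exists (ahat, L); split => //=.
have := L_x ahat; have := proj2 (proj2 L_ahat) x.
rewrite fxE fahat fitzE -!EFinD !lee_fin !(linear_formB (proj1 dual_L)) => le1 le2.
congr EFin; lra.
Qed.

End FitzpatrickMaximizers.

Theorem lemma4p2 (R : realType) (X : completeNormedModType R)
  (f : X -> \bar R) (x : X) (vs : X -> R) (ahat : X) :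
  proper_fun f -> convex_fun f -> lsc_fun f ->
  interior (dom f) x ->
  is_dual vs ->
  frechet_diff_at (fconj f) vs ahat ->
  fitzpatrick f x vs = (f x + fconj f vs)%E ->
  Mset f x vs !=set0 /\
  (forall (a : X) (as_ : X -> R), Mset f x vs (a, as_) ->
     a = ahat /\ subdiff f x as_ /\ subdiff f ahat as_).
Proof.
move=> fp fc fl xi vs_dual fd fitzE.
have fsvE : fconj f vs = (fine (fconj f vs))%:E by rewrite fineK //; case: fd.
have [fx fxE] := proper_fun_dom fp (nbhs_singleton xi).
rewrite fxE fsvE -EFinD in fitzE.
split; first exact: Mset_nonempty fp fd fsvE fxE fitzE fc fl xi vs_dual.
move=> a as_ Ma; exact: (Mset_elements fp fd fsvE fxE fitzE Ma).
Qed.
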